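(* Let $n\ge2$ be an integer and $\lambda>0$, and let $\gamma(t)=(\omega(t),x(t),y(t))$, $t\in(S,T)$ the maximal interval of existence, be a solution with $\omega>0$ of the system $$\frac{d\omega}{dt}=x\omega,\qquad \frac{dx}{dt}=x^2-xy+n-1-\lambda\omega^2,\qquad \frac{dy}{dt}=xy-nx^2-\lambda\omega^2,$$ such that $\int_{t_0}^T\omega(\sigma)\,d\sigma=\infty$ for every $t_0\in(S,T)$. Then $\limsup_{t\to T}x(t)\ge 0$. *)

From Stdlib Require Import Reals.
From Coquelicot Require Import Coquelicot.
Open Scope R_scope.

Definition in_oint (a b : Rbar) (t : R) : Prop := Rbar_lt a t /\ Rbar_lt t b.

Definition is_solution (n : nat) (lambda : R) (a b : Rbar)
  (w x y : R -> R) : Prop :=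
  forall t, in_oint a b t ->
    is_derive w t (x t * w t) /\
    is_derive x t (x t ^ 2 - x t * y t + INR n - 1 - lambda * w t ^ 2) /\
    is_derive y t (x t * y t - INR n * x t ^ 2 - lambda * w t ^ 2).

Definition maximal_solution (n : nat) (lambda : R) (S T : Rbar)
  (w x y : R -> R) : Prop :=
  Rbar_lt S T /\ is_solution n lambda S T w x y /\
  forall (S' T' : Rbar) (w' x' y' : R -> R),
    Rbar_le S' S -> Rbar_le T T' ->
    is_solution n lambda S' T' w' x' y' ->
    (forall t, in_oint S T t -> w' t = w t /\ x' t = x t /\ y' t = y t) ->
    S' = S /\ T' = T.

Definition integral_to_T_infinite (T : Rbar) (w : R -> R) (t0 : R) : Prop :=
  forall M : R, exists s0 : R, Rbar_lt s0 T /\ t0 <= s0 /\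
    forall s : R, s0 <= s -> Rbar_lt s T -> M < RInt w t0 s.

Definition limsup_at_T_nonneg (T : Rbar) (f : R -> R) : Prop :=
  forall eps : R, 0 < eps -> forall s0 : R, Rbar_lt s0 T ->
    exists t : R, s0 < t /\ Rbar_lt t T /\ - eps < f t.

(* Suppose instead that x <= -eps on some final interval (s0, T). There the
   first equation gives w' = x w <= -eps w, so integrating from t1 to s1 yields
   eps * int_{t1}^{s1} w <= w t1 - w s1 < w t1: the integral of w would stay
   bounded as s1 -> T, against its divergence. Only the equation for w enters. *)
From Stdlib Require Import Reals Lra Classical.
From Coquelicot Require Import Coquelicot.
Open Scope R_scope.

Lemma RInt_le_of_derive_le (f df : R -> R) (a b c : R) :
  a <= b ->
  (forall u, a <= u <= b -> is_derive f u (df u)) ->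
  (forall u, a <= u <= b -> continuous df u) ->
  (forall u, a < u < b -> c * f u <= - df u) ->
  c * RInt f a b <= f a - f b.
Proof.
  intros Hab Hder Hcont Hle.
  assert (Hseg : forall u, Rmin a b <= u <= Rmax a b -> a <= u <= b)
    by (rewrite Rmin_left, Rmax_right; auto).
  assert (Hf : ex_RInt f a b).
  { apply (ex_RInt_continuous (V := R_CompleteNormedModule)); intros u Hu.
    apply (ex_derive_continuous (K := R_AbsRing) (V := R_NormedModule)).
    exists (df u); apply Hder, Hseg, Hu. }
  assert (Hmdf : is_RInt (V := R_CompleteNormedModule)
                   (fun u => - df u) a b (f a - f b)).
  { replace (f a - f b) with (opp (minus (f b) (f a)))
      by (rewrite opp_minus; reflexivity).
    apply (is_RInt_opp (V := R_NormedModule)).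
    apply (is_RInt_derive (V := R_CompleteNormedModule)); intros u Hu;
      [apply Hder | apply Hcont]; apply Hseg, Hu. }
  change (c * RInt f a b) with (scal c (RInt f a b)).
  rewrite <- (RInt_scal f a b c Hf), <- (is_RInt_unique _ _ _ _ Hmdf).
  apply RInt_le; auto.
  - apply (ex_RInt_scal f a b c Hf).
  - exists (f a - f b); exact Hmdf.
Qed.

Lemma in_oint_nonempty (S T : Rbar) : Rbar_lt S T -> exists t, in_oint S T t.
Proof.
  unfold in_oint; destruct S as [a| |], T as [b| |]; simpl; intros H; try tauto.
  - exists ((a + b) / 2); simpl; lra.
  - exists (a + 1); simpl; lra.
  - exists (b - 1); simpl; lra.
  - exists 0; simpl; tauto.
Qed.

Lemma in_oint_ge (S T : Rbar) (s0 : R) :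
  Rbar_lt S T -> Rbar_lt s0 T -> exists t, in_oint S T t /\ s0 <= t.
Proof.
  intros HST Hs0; destruct (in_oint_nonempty S T HST) as [t0 [HSt0 Ht0T]].
  exists (Rmax t0 s0); split; [split | apply Rmax_r].
  - apply Rbar_lt_le_trans with t0; [exact HSt0 | apply Rmax_l].
  - unfold Rmax; destruct (Rle_dec t0 s0); assumption.
Qed.

Lemma in_oint_between (S T : Rbar) (a b u : R) :
  in_oint S T a -> Rbar_lt b T -> a <= u <= b -> in_oint S T u.
Proof.
  intros [HSa _] HbT [Hau Hub]; split.
  - apply Rbar_lt_le_trans with a; [exact HSa | exact Hau].
  - apply Rbar_le_lt_trans with b; [exact Hub | exact HbT].
Qed.

Lemma not_limsup_at_T_nonneg (T : Rbar) (f : R -> R) :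
  ~ limsup_at_T_nonneg T f ->
  exists eps s0 : R, 0 < eps /\ Rbar_lt s0 T /\
    forall t, s0 < t -> Rbar_lt t T -> f t <= - eps.
Proof.
  intros Hnot; apply NNPP; intros Hno; apply Hnot.
  intros eps Heps s0 Hs0; apply NNPP; intros Hnone; apply Hno.
  exists eps, s0; repeat split; auto.
  intros t Hs0t HtT; apply Rnot_lt_le; intros Hlt; apply Hnone.
  exists t; auto.
Qed.

Section SolutionRegularity.

Variables (n : nat) (lambda : R) (S T : Rbar) (w x y : R -> R).
Hypothesis Hsol : is_solution n lambda S T w x y.

Lemma solution_continuous_w t : in_oint S T t -> continuous w t.
Proof.
  intros Ht; apply (ex_derive_continuous (K := R_AbsRing) (V := R_NormedModule)).
  eexists; exact (proj1 (Hsol t Ht)).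
Qed.

Lemma solution_continuous_x t : in_oint S T t -> continuous x t.
Proof.
  intros Ht; apply (ex_derive_continuous (K := R_AbsRing) (V := R_NormedModule)).
  eexists; exact (proj1 (proj2 (Hsol t Ht))).
Qed.

Lemma solution_continuous_xw t : in_oint S T t -> continuous (fun u => x u * w u) t.
Proof.
  intros Ht; apply (continuous_mult (K := R_AbsRing) x w);
    [apply solution_continuous_x | apply solution_continuous_w]; exact Ht.
Qed.

End SolutionRegularity.

Lemma solution_integral_bound (n : nat) (lambda eps : R) (S T : Rbar)
  (w x y : R -> R) (a b : R) :
  is_solution n lambda S T w x y ->
  in_oint S T a -> in_oint S T b -> a <= b ->
  (forall u, a < u < b -> 0 < w u /\ x u <= - eps) ->
  eps * RInt w a b <= w a - w b.
Proof.
  intros Hsol Ha Hb Hab Hdecay.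
  apply (RInt_le_of_derive_le w (fun u => x u * w u)); auto.
  - intros u Hu; apply (Hsol u (in_oint_between S T a b u Ha (proj2 Hb) Hu)).
  - intros u Hu; apply (solution_continuous_xw n lambda S T w x y Hsol).
    apply (in_oint_between S T a b u Ha (proj2 Hb) Hu).
  - intros u Hu; destruct (Hdecay u Hu); nra.
Qed.

Theorem lemma3p6 (n : nat) (lambda : R) (S T : Rbar) (w x y : R -> R) :
  (2 <= n)%nat -> 0 < lambda ->
  maximal_solution n lambda S T w x y ->
  (forall t, in_oint S T t -> 0 < w t) ->
  (forall t0, in_oint S T t0 -> integral_to_T_infinite T w t0) ->
  limsup_at_T_nonneg T x.
Proof.
  intros _ _ [HST [Hsol _]] Hpos Hdiv.
  apply NNPP; intros Hnot.
  destruct (not_limsup_at_T_nonneg T x Hnot) as [eps [s0 [Heps [Hs0T Hx]]]].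
  destruct (in_oint_ge S T s0 HST Hs0T) as [t1 [Ht1 Hs0t1]].
  destruct (Hdiv t1 Ht1 (w t1 / eps)) as [s1 [Hs1T [Ht1s1 Hbig]]].
  specialize (Hbig s1 (Rle_refl s1) Hs1T).
  assert (Hs1 : in_oint S T s1)
    by (apply (in_oint_between S T t1 s1 s1 Ht1 Hs1T); lra).
  assert (Hbound : eps * RInt w t1 s1 <= w t1 - w s1).
  { apply (solution_integral_bound n lambda eps S T w x y); auto.
    intros u Hu; split.
    - apply Hpos, (in_oint_between S T t1 s1 u Ht1 Hs1T); lra.
    - apply Hx; [lra | apply (in_oint_between S T t1 s1 u Ht1 Hs1T); lra]. }
  pose proof (Hpos s1 Hs1).
  assert (eps * (w t1 / eps) = w t1) by (field; lra).
  nra.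
Qed.
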